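(* Let $I\subset S$ be a nonzero proper graded ideal. Then $$\lim_{k\to\infty}\frac{\mathrm{v}(I^k)}{k}=\alpha(I).$$
   Context: $S=K[x_1,\dots,x_n]$ is a standard graded polynomial ring over a field $K$, $S_d$ its degree-$d$ component. For a graded ideal $I\subset S$, the v-number of $I$ is $\mathrm{v}(I)=\min\{d:\exists f\in S_d\text{ with }(I:f)\in\operatorname{Ass}(I)\}$. For a nonzero graded module $M=\bigoplus_d M_d$, $\alpha(M)=\min\{d:M_d\neq0\}$ is its initial degree; $\alpha(I)$ is the least degree of a nonzero element of $I$. *)

From HB Require Import structures.
From mathcomp Require Import all_boot all_order all_algebra.
From mathcomp Require Export mpoly.
Set Implicit Arguments. Unset Strict Implicit. Unset Printing Implicit Defensive.
Import Order.TTheory GRing.Theory Num.Theory.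
Local Open Scope ring_scope.

Definition polyset (K : fieldType) (n : nat) := {mpoly K[n]} -> Prop.

Section Ideals.
Variables (K : fieldType) (n : nat).
Implicit Types (I J P : polyset K n) (f g : {mpoly K[n]}).

Definition is_ideal I : Prop :=
  [/\ I 0, (forall f g, I f -> I g -> I (f + g)) & (forall r f, I f -> I (r * f))].

(* graded (homogeneous) ideal: closed under taking homogeneous components
   (pihomog mdeg d f is the degree-d homogeneous component of f) *)
Definition is_graded_ideal I : Prop :=
  is_ideal I /\ forall f (d : nat), I f -> I (pihomog mdeg d f).

Definition is_proper I : Prop := exists f, ~ I f.
Definition is_nonzero I : Prop := exists f, I f /\ f != 0.

Definition is_prime_ideal P : Prop :=
  [/\ is_ideal P, ~ P 1 & forall a b, P (a * b) -> P a \/ P b].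

Definition colon I f : polyset K n := fun g => I (g * f).

Definition ideal_eq I J : Prop := forall f, I f <-> J f.

Definition Ass I : polyset K n -> Prop :=
  fun P => is_prime_ideal P /\ exists g, ideal_eq P (colon I g).

Definition ideal_mul I J : polyset K n :=
  fun f => exists s : seq ({mpoly K[n]} * {mpoly K[n]}),
    (forall x, x \in s -> I x.1 /\ J x.2) /\ f = \sum_(x <- s) x.1 * x.2.

Fixpoint ideal_pow I (k : nat) : polyset K n :=
  match k with
  | 0 => fun _ => True
  | k'.+1 => ideal_mul (ideal_pow I k') I
  end.

(* d = v(I): least d such that some f in S_d has (I : f) in Ass(I).
   (S_d = homogeneous polynomials of degree d, including 0.) *)
Definition is_vnumber I (d : nat) : Prop :=
  (exists f, f \is d.-homog /\ Ass I (colon I f)) /\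
  (forall (e : nat) f, f \is e.-homog -> Ass I (colon I f) -> (d <= e)%N).

Definition is_initdeg I (al : nat) : Prop :=
  (exists f, [/\ f != 0, f \is al.-homog & I f]) /\
  (forall (e : nat) f, f != 0 -> f \is e.-homog -> I f -> (al <= e)%N).

End Ideals.

Definition seq_converges_to (u : nat -> rat) (l : rat) : Prop :=
  forall eps : rat, 0 < eps -> exists N : nat, forall k : nat, (N <= k)%N -> `|u k - l| < eps.

From HB Require Import structures.
From mathcomp Require Import all_boot all_order all_algebra.
From mathcomp Require Import mpoly.
From mathcomp Require Import ring lra zify.
From Stdlib Require Import Classical ClassicalEpsilon.
Import Order.TTheory GRing.Theory Num.Theory.
Set Implicit Arguments. Unset Strict Implicit. Unset Printing Implicit Defensive.
Local Open Scope ring_scope.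

(* Let I be a nonzero proper graded ideal of S = K[x_1..x_n], a = alpha(I) > 0
   and g a nonzero element of I_a.  We prove (k-1)a <= v(I^k) <= (k-1)a + delta
   for large k, whence v(I^k)/k -> a.
   - Order bound: every monomial of an element of I^k has degree >= ka.
   - Lower bound: if (I^k : f) is prime with f of degree e, then g^k in I^k
     forces g in (I^k : f); gf is a nonzero element of I^k of degree a + e,
     so ka <= a + e.
   - Upper bound: the colon ideals J_t = (I^(t+1) : g^t) form an ascending
     chain, which stabilizes at some t0 by Noetherianity (proved here from
     Dickson's lemma through leading monomials).  A homogeneous h of degree
     delta with (J_t0 : h) prime exists, since a colon ideal (J : h) maximal
     among those with h homogeneous is prime.  For k = t+1 > t0 we then have
     (I^k : g^t h) = (J_t0 : h), an associated prime of degree t a + delta. *)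

Lemma chain_mono (T : Type) (C : nat -> T -> Prop) :
  (forall t x, C t x -> C t.+1 x) ->
  forall s t, (s <= t)%N -> forall x, C s x -> C t x.
Proof.
move=> Cinc s t; apply: (homo_leq (f := C) (r := fun A B => forall x, A x -> B x)).
- by [].
- by move=> B A D hAB hBD x /hAB /hBD.
- exact: Cinc.
Qed.

Lemma ex_min (P : nat -> Prop) :
  (exists k, P k) -> exists m, P m /\ forall k, P k -> (m <= k)%N.
Proof.
move=> [k hk]; elim/ltn_ind: k hk => k IH hk.
case: (classic (exists j, (j < k)%N /\ P j)) => [[j [hj pj]]|hn]; first exact: IH hj pj.
exists k; split => // j pj; rewrite leqNgt; apply/negP => hj; apply: hn; by exists j.
Qed.

Section IdealArithmetic.
Variables (K : fieldType) (n : nat).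
Local Notation S := {mpoly K[n]}.
Implicit Types (I J P : polyset K n) (f g x : S).

Lemma ideal0 I : is_ideal I -> I 0.
Proof. by case. Qed.

Lemma idealD I f g : is_ideal I -> I f -> I g -> I (f + g).
Proof. by case=> _ hD _; apply: hD. Qed.

Lemma idealM I x f : is_ideal I -> I f -> I (x * f).
Proof. by case=> _ _ hM; apply: hM. Qed.

Lemma idealMr I x f : is_ideal I -> I f -> I (f * x).
Proof. by move=> hI hf; rewrite mulrC; apply: idealM. Qed.

Lemma idealB I f g : is_ideal I -> I f -> I g -> I (f - g).
Proof. by move=> hI hf hg; rewrite -mulN1r; apply: idealD => //; apply: idealM. Qed.

Lemma ideal_big I (T : Type) (r : seq T) (Q : pred T) (F : T -> S) :
  is_ideal I -> (forall i, Q i -> I (F i)) -> I (\sum_(i <- r | Q i) F i).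
Proof. by move=> hI hF; apply: big_ind => //; [apply: ideal0 | move=> ? ?; apply: idealD]. Qed.

Lemma prime_ext P P' : ideal_eq P P' -> is_prime_ideal P -> is_prime_ideal P'.
Proof.
move=> E [[h0 hD hM] n1 hp]; split.
- split; first by apply/E.
  + by move=> f g /E hf /E hg; apply/E; apply: hD.
  + by move=> r f /E hf; apply/E; apply: hM.
- by move/E.
- by move=> a b /E /hp [] ?; [left|right]; apply/E.
Qed.

Lemma prime_pow P x k : is_prime_ideal P -> P (x ^+ k.+1) -> P x.
Proof.
move=> [_ _ hp]; elim: k => [|k IH]; first by rewrite expr1.
by rewrite exprSr => /hp [].
Qed.

Lemma Ass_colon J f : is_prime_ideal (colon J f) -> Ass J (colon J f).
Proof. by move=> hP; split => //; exists f. Qed.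

Lemma ideal_mul_prod I J a b : I a -> J b -> ideal_mul I J (a * b).
Proof.
move=> ha hb; exists [:: (a, b)]; split; last by rewrite big_seq1.
by move=> y; rewrite inE => /eqP ->.
Qed.

Lemma ideal_mul_ideal I J : is_ideal I -> is_ideal J -> is_ideal (ideal_mul I J).
Proof.
move=> hI hJ; split.
- by exists [::]; split => //; rewrite big_nil.
- move=> f g [s1 [h1 ->]] [s2 [h2 ->]]; exists (s1 ++ s2); split; last by rewrite big_cat.
  by move=> y; rewrite mem_cat => /orP[]; [apply: h1|apply: h2].
- move=> r f [s [hs ->]]; exists [seq (r * y.1, y.2) | y <- s]; split.
    move=> y /mapP[z hz ->] /=; have [h1 h2] := hs z hz; split => //.
    exact: idealM.
  by rewrite big_map mulr_sumr; apply: eq_bigr => y _ /=; rewrite mulrA.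
Qed.

Lemma pow_in I g k : I g -> ideal_pow I k (g ^+ k).
Proof.
move=> hg; elim: k => [|k IH] //=.
by rewrite exprSr; apply: ideal_mul_prod.
Qed.

Lemma colon_ideal I f : is_ideal I -> is_ideal (colon I f).
Proof.
move=> hI; split; rewrite /colon.
- by rewrite mul0r; apply: ideal0.
- by move=> a b ha hb; rewrite mulrDl; apply: idealD.
- by move=> r a ha; rewrite -mulrA; apply: idealM.
Qed.

End IdealArithmetic.

Section HomogeneousComponents.
Variables (K : fieldType) (n : nat).
Local Notation S := {mpoly K[n]}.
Implicit Types (f g p x : S).

Lemma mcoeff_pihomog d p m :
  (pihomog mdeg d p)@_m = if mdeg m == d then p@_m else 0.
Proof.
rewrite pihomogE raddf_sum /= big_mkcond /=.
under eq_bigr do rewrite mcoeffZ mcoeffX.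
case: (boolP (m \in msupp p)) => hm.
  rewrite (bigD1_seq m) ?msupp_uniq //= eqxx mulr1 big1 ?addr0 //.
  by move=> i /negPf ->; case: ifP => _; rewrite ?mulr0.
rewrite big_seq big1 ?(memN_msupp_eq0 hm); first by case: ifP.
move=> i hi; have -> : (i == m) = false.
  by apply/negP => /eqP E; move: hi; rewrite E (negPf hm).
by case: ifP; rewrite ?mulr0.
Qed.

Lemma mcoeff_homog e f m : f \is e.-homog -> f@_m != 0 -> mdeg m = e.
Proof. by move=> /dhomogP hf hm; apply: hf; rewrite mcoeff_msupp. Qed.

Lemma mcoeff_deg_lt p m : p@_m != 0 -> (mdeg m < msize p)%N.
Proof. by move=> hm; apply: msize_mdeg_lt; rewrite mcoeff_msupp. Qed.

Lemma msize_le k p : (forall m, (k <= mdeg m)%N -> p@_m = 0) -> (msize p <= k)%N.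
Proof.
move=> h; rewrite msizeE; apply/bigmax_leqP_seq => m hm _.
by rewrite ltnNge; apply/negP => /h /eqP; rewrite mcoeff_eq0 hm.
Qed.

Lemma pihomogM_homog d e x f : f \is e.-homog ->
  pihomog mdeg d (x * f) = if (e <= d)%N then pihomog mdeg (d - e) x * f else 0.
Proof.
move=> hf; apply/mpolyP => m; rewrite mcoeff_pihomog mcoeffM.
have deg_split (m1 m2 : 'X_{1..n}) : m = (m1 + m2)%MM -> f@_m2 != 0 ->
    mdeg m = (mdeg m1 + e)%N.
  by move=> -> nz; rewrite mdegD (mcoeff_homog hf nz).
case: (leqP e d) => hed; last first.
  rewrite mcoeff0; case: eqP => // hmd; rewrite big1 // => k /eqP hk.
  have [->|nz] := eqVneq (f@_k.2) 0; first by rewrite mulr0.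
  by have := deg_split _ _ hk nz; lia.
have deg_eq (m1 m2 : 'X_{1..n}) : m = (m1 + m2)%MM -> f@_m2 != 0 ->
    (mdeg m1 == (d - e)%N) = (mdeg m == d).
  by move=> hm nz; rewrite (deg_split _ _ hm nz) -(eqn_add2r e) subnK.
rewrite mcoeffM; case: eqP => hmd.
  apply: eq_bigr => k /eqP hk; rewrite mcoeff_pihomog.
  have [->|nz] := eqVneq (f@_k.2) 0; first by rewrite !mulr0.
  by rewrite (deg_eq _ _ hk nz) (introT eqP hmd).
apply/esym/big1 => k /eqP hk; rewrite mcoeff_pihomog.
have [->|nz] := eqVneq (f@_k.2) 0; first by rewrite !mulr0.
by rewrite (deg_eq _ _ hk nz) (introF eqP hmd) mul0r.
Qed.

Lemma pihomog_top da db (a b : S) : (msize a <= da.+1)%N -> (msize b <= db.+1)%N ->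
  pihomog mdeg (da + db) (a * b) = pihomog mdeg da a * pihomog mdeg db b.
Proof.
move=> ha hb; apply/mpolyP => m; rewrite mcoeff_pihomog !mcoeffM.
suff term (m1 m2 : 'X_{1..n}) : m = (m1 + m2)%MM ->
    (if mdeg m == (da + db)%N then a@_m1 * b@_m2 else 0) =
    (pihomog mdeg da a)@_m1 * (pihomog mdeg db b)@_m2.
  case: ifP => hmd; [apply: eq_bigr | apply/esym/big1] => k /eqP hk.
    by have := term _ _ hk; rewrite hmd.
  by have := term _ _ hk; rewrite hmd.
move=> ->; rewrite !mcoeff_pihomog mdegD.
have [->|nza] := eqVneq (a@_m1) 0; first by rewrite !(mul0r, if_same).
have [->|nzb] := eqVneq (b@_m2) 0; first by rewrite !(mulr0, if_same).
have h1 : (mdeg m1 <= da)%N := leq_trans (mcoeff_deg_lt nza) ha.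
have h2 : (mdeg m2 <= db)%N := leq_trans (mcoeff_deg_lt nzb) hb.
have -> : (mdeg m1 + mdeg m2 == da + db)%N = (mdeg m1 == da) && (mdeg m2 == db).
  by apply/idP/andP => [/eqP hs|[/eqP -> /eqP -> //]]; split; apply/eqP; lia.
by case: eqP; case: eqP; rewrite /= ?(mulr0, mul0r).
Qed.

Lemma msize_drop_top (a : S) : a != 0 ->
  (msize (a - pihomog mdeg (msize a).-1 a) < msize a)%N.
Proof.
move=> nz; have hpos : (0 < msize a)%N by rewrite lt0n mmeasure_poly_eq0.
rewrite -(prednK hpos) ltnS; apply: msize_le => m hm.
rewrite mcoeffB mcoeff_pihomog; case: eqP => [_|ne]; first by rewrite subrr.
apply/eqP; rewrite subr0 mcoeff_eq0; apply: msize_mdeg_ge; lia.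
Qed.

Lemma homog0_const f : f \is 0.-homog -> f = (f@_0)%:MP.
Proof.
move=> hf; apply: msize1_polyC; apply: msize_le => m hm.
by apply/eqP/negP => /negP nz; move: hm; rewrite (mcoeff_homog hf nz).
Qed.

End HomogeneousComponents.

Section GradedIdeals.
Variables (K : fieldType) (n : nat).
Local Notation S := {mpoly K[n]}.
Implicit Types (I J : polyset K n) (f g p : S).

Lemma ideal_mul_graded I J : is_graded_ideal I -> is_graded_ideal J ->
  is_graded_ideal (ideal_mul I J).
Proof.
move=> [hI gI] [hJ gJ]; split; first exact: ideal_mul_ideal.
move=> f d [s [hs ->]]; have hM := ideal_mul_ideal hI hJ.
rewrite big_seq raddf_sum /=; apply: ideal_big => // y hy.
have [h1 h2] := hs y hy.
rewrite [in X in pihomog _ _ (_ * X)](@pihomog_partitionE _ _ mdeg (msize y.2) y.2 (leqnn _)).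
rewrite mulr_sumr raddf_sum /=; apply: ideal_big => // i _.
rewrite (@pihomogM_homog K n d i) ?pihomogP //; case: ifP => _; last exact: ideal0.
by apply: ideal_mul_prod; [apply: gI | apply: gJ].
Qed.

Lemma ideal_pow_graded I k : is_graded_ideal I -> is_graded_ideal (ideal_pow I k).
Proof.
move=> hI; elim: k => [|k IH] /=; last exact: ideal_mul_graded.
by split => //; split.
Qed.

Lemma colon_graded I f e : is_graded_ideal I -> f \is e.-homog ->
  is_graded_ideal (colon I f).
Proof.
move=> [hI gI] hf; split; first exact: colon_ideal.
move=> g d hg; have := gI _ (d + e)%N hg.
by rewrite /colon (pihomogM_homog _ _ hf) leq_addl addnK.
Qed.

Definition order_ge d p := forall m, (mdeg m < d)%N -> p@_m = 0.

Lemma order_ge_sum d (T : Type) (r : seq T) (Q : pred T) (F : T -> S) :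
  (forall i, Q i -> order_ge d (F i)) -> order_ge d (\sum_(i <- r | Q i) F i).
Proof. by move=> hF m hm; rewrite raddf_sum big1 // => i /hF; apply. Qed.

Lemma order_geM d e p q : order_ge d p -> order_ge e q -> order_ge (d + e) (p * q).
Proof.
move=> hp hq m hm.
suff term (m1 m2 : 'X_{1..n}) : m = (m1 + m2)%MM -> p@_m1 * q@_m2 = 0.
  by rewrite mcoeffM big1 // => k /eqP /term.
move=> E; move: hm; rewrite E mdegD => hm.
case: (ltnP (mdeg m1) d) => [/hp -> | le1]; first by rewrite mul0r.
by rewrite hq ?mulr0 //; lia.
Qed.

Lemma graded_order_ge I a f : is_graded_ideal I -> is_initdeg I a -> I f -> order_ge a f.
Proof.
move=> [_ gI] [_ ha] hf m; apply: contraTeq => hm.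
have h0 : pihomog mdeg (mdeg m) f != 0.
  apply: contraNneq hm => E; have := mcoeff_pihomog (mdeg m) f m.
  by rewrite E mcoeff0 eqxx => <-.
by rewrite -leqNgt; apply: ha _ _ h0 (pihomogP _ _ _) (gI _ _ hf).
Qed.

Lemma ideal_pow_order_ge I a k f : is_graded_ideal I -> is_initdeg I a ->
  ideal_pow I k f -> order_ge (k * a) f.
Proof.
move=> hI ha; elim: k f => [|k IH] f /=; first by move=> _ m.
move=> [s [hs ->]]; rewrite big_seq; apply: order_ge_sum => y hy.
have [h1 h2] := hs y hy; rewrite mulSnr; apply: order_geM; first exact: IH.
exact: graded_order_ge h2.
Qed.

Lemma pow_homog_deg I a k e f : is_graded_ideal I -> is_initdeg I a ->
  ideal_pow I k f -> f != 0 -> f \is e.-homog -> (k * a <= e)%N.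
Proof.
move=> hI ha hf nzf fe; rewrite leqNgt; apply/negP => lt.
have nzc : f@_(mlead f) != 0 by rewrite mleadc_eq0.
have := ideal_pow_order_ge hI ha hf (m := mlead f).
by rewrite (mcoeff_homog fe nzc) => /(_ lt) /eqP; rewrite (negPf nzc).
Qed.

End GradedIdeals.

Section Dickson.

Lemma min_after (g : nat -> nat) p :
  exists q, (p < q)%N /\ forall i, (p < i)%N -> (g q <= g i)%N.
Proof.
suff H : forall v i, (p < i)%N -> (g i <= v)%N ->
    exists q, (p < q)%N /\ forall i, (p < i)%N -> (g q <= g i)%N.
  exact: (H (g p.+1) p.+1).
elim=> [|v IH] i hi hv.
  by exists i; split => // j _; move: hv; rewrite leqn0 => /eqP ->.
case: (classic (exists i', (p < i')%N /\ (g i' <= v)%N)) => [[i' [h1 h2]]|hn].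
  exact: IH h1 h2.
exists i; split => // j hj; apply: (leq_trans hv); rewrite ltnNge; apply/negP => hjv.
by apply: hn; exists j.
Qed.

Lemma nondecreasing_subseq (g : nat -> nat) : exists psi : nat -> nat,
  (forall s, psi s < psi s.+1)%N /\ (forall s, g (psi s) <= g (psi s.+1))%N.
Proof.
have H := min_after g.
pose idx p := proj1_sig (constructive_indefinite_description _ (H p)).
have idxP p : (p < idx p)%N /\ forall i, (p < i)%N -> (g (idx p) <= g i)%N.
  exact: proj2_sig (constructive_indefinite_description _ (H p)).
exists (fun s => iter s.+1 idx 0%N); split => s.
  by rewrite [iter s.+2 _ _]iterS; case: (idxP (iter s.+1 idx 0%N)).
rewrite [iter s.+2 _ _]iterS [iter s.+1 _ _]iterS.
set a := iter s idx 0%N.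
have [h1 h2] := idxP a; have [h3 _] := idxP (idx a).
by apply: h2; apply: ltn_trans h3.
Qed.

Lemma dickson_coords n (f : nat -> 'X_{1..n}) j : (j <= n)%N ->
  exists phi : nat -> nat, (forall s, phi s < phi s.+1)%N /\
    forall s (i : 'I_n), (i < j)%N -> (f (phi s) i <= f (phi s.+1) i)%N.
Proof.
elim: j => [|j IH] hj; first by exists id; split.
have [phi [hphi hmon]] := IH (ltnW hj).
pose jj : 'I_n := Ordinal hj.
have [psi [hpsi hmpsi]] := nondecreasing_subseq (fun s => f (phi s) jj).
exists (fun s => phi (psi s)); split => [s|s i hi].
  exact: (homo_ltn (r := fun a b => (a < b)%N)) (ltn_trans) hphi _ _ (hpsi s).
rewrite ltnS leq_eqVlt in hi; case/orP: hi => [/eqP hij|hi].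
  by have -> : i = jj by apply: val_inj.
apply: (homo_leq (f := fun s => f (phi s) i) (r := fun a b => (a <= b)%N)) => //.
- exact: leq_trans.
- by move=> t; apply: hmon.
- exact: ltnW.
Qed.

Lemma dickson n (f : nat -> 'X_{1..n}) : exists i j, (i < j)%N /\ (f i <= f j)%MM.
Proof.
have [phi [hphi hmon]] := dickson_coords f (leqnn n).
exists (phi 0%N), (phi 1%N); split; first exact: hphi.
by apply/mnm_lepP => i; apply: hmon.
Qed.

End Dickson.

Section Noetherian.
Variables (K : fieldType) (n : nat).
Local Notation S := {mpoly K[n]}.
Implicit Types (I J Q : polyset K n) (f g p q x : S).

Definition lead_mon J (m : 'X_{1..n}) := exists p, [/\ J p, p != 0 & mlead p = m].

Lemma mpolyX_neq0 (e : 'X_{1..n}) : 'X_[e] != 0 :> S.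
Proof.
apply/eqP => E; have := @mcoeffX n K e e; rewrite E mcoeff0 eqxx => /eqP.
by rewrite eq_sym oner_eq0.
Qed.

Lemma lead_mon_up J m e : is_ideal J -> lead_mon J m -> lead_mon J (m + e)%MM.
Proof.
move=> hJ [p [hp nz <-]]; exists (p * 'X_[e]); split.
- exact: idealMr.
- by rewrite mulf_neq0 // mpolyX_neq0.
- by rewrite mleadM // ?mpolyX_neq0 // mleadXm.
Qed.

Lemma lead_mon_sub J J' m : (forall x, J x -> J' x) -> lead_mon J m -> lead_mon J' m.
Proof. by move=> h [p [hp nz E]]; exists p; split => //; apply: h. Qed.

Lemma lead_mon_eq J J' : is_ideal J -> is_ideal J' -> (forall x, J x -> J' x) ->
  (forall m, lead_mon J' m -> lead_mon J m) -> forall x, J' x -> J x.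
Proof.
move=> hJ hJ' sub hLT p; elim/mleadrect: p => p IH hp.
have [->|nzp] := eqVneq p 0; first exact: ideal0.
have [q [hq nzq Eq]] := hLT (mlead p) (ex_intro _ p (And3 hp nzp erefl)).
pose c := p@_(mlead p) / q@_(mlead q).
have hcq : J (c *: q) by rewrite -mul_mpolyC; apply: idealM.
have Ep : p = (p - c *: q) + c *: q by rewrite subrK.
have hr' : J' (p - c *: q) by apply: idealB => //; apply: sub.
have [Er|nzr] := eqVneq (p - c *: q) 0; first by rewrite Ep Er add0r.
rewrite Ep; apply: idealD => //; apply: IH => //.
have le1 : (mlead (p - c *: q) <= mlead p)%O.
  apply: le_trans (mleadB_le _ _) _; rewrite leUx lexx /=.
  by rewrite -Eq mleadZ_le.
rewrite lt_neqAle le1 andbT; apply/negP => /eqP E.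
move/negP: nzr; apply; rewrite -mleadc_eq0 E mcoeffB mcoeffZ /c Eq divfK ?subrr //.
by rewrite -Eq mleadc_eq0.
Qed.

(* Ascending chain condition: an ascending chain of ideals cannot grow at
   every step, since new leading monomials would contradict Dickson. *)
Lemma ideal_chain_stalls (C : nat -> polyset K n) :
  (forall t, is_ideal (C t)) -> (forall t x, C t x -> C t.+1 x) ->
  exists t, forall x, C t.+1 x -> C t x.
Proof.
move=> hC Cinc; apply: NNPP => H.
have newLT t : exists m, lead_mon (C t.+1) m /\ ~ lead_mon (C t) m.
  apply: NNPP => H1; apply: H; exists t.
  apply: lead_mon_eq (hC t) (hC t.+1) (Cinc t) _ => m hm.
  by apply: NNPP => nm; apply: H1; exists m.
pose mm t := proj1_sig (constructive_indefinite_description _ (newLT t)).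
have mmP t : lead_mon (C t.+1) (mm t) /\ ~ lead_mon (C t) (mm t).
  exact: proj2_sig (constructive_indefinite_description _ (newLT t)).
have [i [j [hij hle]]] := dickson mm.
apply: (proj2 (mmP j)); rewrite -(submK hle) addmC; apply: lead_mon_up (hC j) _.
exact: lead_mon_sub (chain_mono Cinc hij) (proj1 (mmP i)).
Qed.

Lemma noeth_max (F : polyset K n -> Prop) :
  (forall Q, F Q -> is_ideal Q) -> (exists Q, F Q) ->
  exists Q, F Q /\ forall Q', F Q' -> (forall x, Q x -> Q' x) -> forall x, Q' x -> Q x.
Proof.
move=> hF [Q0 hQ0]; apply: NNPP => nomax.
have grow (w : {Q | F Q}) : exists w' : {Q | F Q},
    (forall x, sval w x -> sval w' x) /\ exists x, sval w' x /\ ~ sval w x.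
  apply: NNPP => H; apply: nomax; exists (sval w); split; first exact: svalP.
  move=> Q' hQ' sub x hx; apply: NNPP => nx; apply: H.
  by exists (exist _ Q' hQ'); split => //; exists x.
pose next (w : {Q | F Q}) := proj1_sig (constructive_indefinite_description _ (grow w)).
have nextP (w : {Q | F Q}) := proj2_sig (constructive_indefinite_description _ (grow w)).
pose C t := sval (iter t next (exist _ Q0 hQ0)).
have Cinc t x : C t x -> C t.+1 x by rewrite /C iterS; apply: (proj1 (nextP _)).
have [t stall] := ideal_chain_stalls (fun t => hF _ (svalP _)) Cinc.
have [x [hx nx]] := proj2 (nextP (iter t next (exist _ Q0 hQ0))).
exact: nx (stall x hx).
Qed.

Lemma ideal_chain_stabilizes (C : nat -> polyset K n) :
  (forall t, is_ideal (C t)) -> (forall t x, C t x -> C t.+1 x) ->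
  exists t0, forall t, (t0 <= t)%N -> ideal_eq (C t) (C t0).
Proof.
move=> hC Cinc.
pose F Q := exists t, Q = C t.
have hF Q : F Q -> is_ideal Q by case=> t ->.
have [Q [[t0 ->] hmax]] := noeth_max hF (ex_intro F _ (ex_intro _ 0%N erefl)).
exists t0 => t ht; have Cmono := @chain_mono _ C Cinc t0 t ht.
move=> x; split; last exact: Cmono.
by apply: (hmax (C t)); [exists t | exact: Cmono].
Qed.

End Noetherian.

Section HomogeneousPrimes.
Variables (K : fieldType) (n : nat).
Local Notation S := {mpoly K[n]}.
Implicit Types (J Q : polyset K n) (f g : S).

(* A proper graded ideal is prime as soon as primality holds for products of
   homogeneous elements: peel top components off by induction on sizes. *)
Lemma graded_prime Q : is_ideal Q -> (forall p (d : nat), Q p -> Q (pihomog mdeg d p)) ->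
  ~ Q 1 ->
  (forall (a b : S) (da db : nat), a \is da.-homog -> b \is db.-homog ->
     Q (a * b) -> Q a \/ Q b) ->
  is_prime_ideal Q.
Proof.
move=> hQ gQ nQ1 hh; split => // a b.
suff H : forall N (a b : S), (msize a + msize b <= N)%N -> Q (a * b) -> Q a \/ Q b.
  exact: (H _ a b (leqnn _)).
elim=> [|N IH] {}a {}b hN hab.
  left; move: hN; rewrite leqn0 addn_eq0 mmeasure_poly_eq0 => /andP[/eqP -> _].
  exact: ideal0.
have [->|nza] := eqVneq a 0; first by left; apply: ideal0.
have [->|nzb] := eqVneq b 0; first by right; apply: ideal0.
set atp := pihomog mdeg (msize a).-1 a; set btp := pihomog mdeg (msize b).-1 b.
have [hat|hat] := classic (Q atp).
  have h1 : Q ((a - atp) * b) by rewrite mulrBl; apply: idealB => //; apply: idealMr.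
  have hlt : (msize (a - atp) + msize b <= N)%N.
    by rewrite -ltnS; apply: leq_trans hN; rewrite ltn_add2r msize_drop_top.
  case: (IH _ _ hlt h1) => [ha'|]; last by right.
  by left; rewrite -(subrK atp a); apply: idealD.
have [hbt|hbt] := classic (Q btp).
  have h1 : Q (a * (b - btp)) by rewrite mulrBr; apply: idealB => //; apply: idealM.
  have hlt : (msize a + msize (b - btp) <= N)%N.
    by rewrite -ltnS; apply: leq_trans hN; rewrite ltn_add2l msize_drop_top.
  case: (IH _ _ hlt h1) => [|hb']; first by left.
  by right; rewrite -(subrK btp b); apply: idealD.
have := gQ _ ((msize a).-1 + (msize b).-1)%N hab.
rewrite (pihomog_top (leqSpred _) (leqSpred _)) => H.
by case: (hh _ _ _ _ (pihomogP mdeg _ a) (pihomogP mdeg _ b) H).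
Qed.

(* A proper graded ideal has an associated prime (J : f) with f homogeneous:
   take (J : f) maximal among colon ideals by homogeneous f outside J. *)
Lemma exists_hom_prime J : is_graded_ideal J -> ~ J 1 ->
  exists f (d : nat), f \is d.-homog /\ is_prime_ideal (colon J f).
Proof.
move=> [hJ gJ] nJ1.
pose F Q := exists f (d : nat), [/\ f \is d.-homog, ~ J f & Q = colon J f].
have hF Q : F Q -> is_ideal Q by move=> [f [d [_ _ ->]]]; apply: colon_ideal.
have [Q [[f0 [d0 [hf0 nJf0 ->]]] hmax]] : exists Q, F Q /\ forall Q', F Q' ->
    (forall x, Q x -> Q' x) -> forall x, Q' x -> Q x.
  apply: noeth_max => //; exists (colon J 1), 1, 0%N; split => //; exact: dhomog1.
exists f0, d0; split => //; apply: graded_prime.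
- exact: colon_ideal.
- by case: (colon_graded (conj hJ gJ) hf0).
- by rewrite /colon mul1r.
move=> a b da db ha hb hab; have [|nQa] := classic (colon J f0 a); first by left.
right; have hF' : F (colon J (a * f0)).
  by exists (a * f0), (da + d0)%N; split => //; exact: dhomogM.
apply: (hmax _ hF').
  by move=> x hx; rewrite /colon mulrCA; apply: idealM.
by rewrite /colon mulrA [b * a]mulrC.
Qed.

Lemma vnumber_exists J : is_graded_ideal J -> ~ J 1 -> exists d, is_vnumber J d.
Proof.
move=> hJ nJ1; have [f [d [hf hP]]] := exists_hom_prime hJ nJ1.
have [m [[f' [hf' hA]] hmin]] :=
  @ex_min (fun d => exists f, f \is d.-homog /\ Ass J (colon J f))
    (ex_intro _ d (ex_intro _ f (conj hf (Ass_colon hP)))).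
exists m; split; first by exists f'.
by move=> e g hg hA'; apply: hmin; exists g.
Qed.

End HomogeneousPrimes.

Section InitialDegree.
Variables (K : fieldType) (n : nat).
Local Notation S := {mpoly K[n]}.
Implicit Types (I : polyset K n) (f g : S).

(* A nonzero graded ideal has an initial degree: take the least degree of
   a nonzero homogeneous component of one of its elements. *)
Lemma initdeg_exists I : is_graded_ideal I -> is_nonzero I -> exists a, is_initdeg I a.
Proof.
move=> [_ gI] [f [hf nzf]].
pose D e := exists g, [/\ g != 0, g \is e.-homog & I g].
have [a [ha hmin]] : exists a, D a /\ forall e, D e -> (a <= e)%N.
  apply: ex_min; exists (mdeg (mlead f)), (pihomog mdeg (mdeg (mlead f)) f); split.
  - apply/eqP => E; have := mcoeff_pihomog (mdeg (mlead f)) f (mlead f).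
    by rewrite E mcoeff0 eqxx => /esym/eqP; rewrite mleadc_eq0 (negPf nzf).
  - exact: pihomogP.
  - exact: gI.
by exists a; split => // e g nzg hg Ig; apply: hmin; exists g.
Qed.

(* A proper ideal contains no nonzero constant, so alpha(I) > 0. *)
Lemma initdeg_pos I a : is_graded_ideal I -> is_proper I -> is_initdeg I a -> (0 < a)%N.
Proof.
move=> [hI _] [h nh] [[f [nzf hf If]] _]; rewrite lt0n; apply/negP => /eqP a0.
subst a; apply: nh; have Ef := homog0_const hf.
have nzc : f@_0 != 0 by apply: contraNneq nzf => E; rewrite Ef E mpolyC0.
have I1 : I 1.
  by have := idealM ((f@_0)^-1)%:MP hI If; rewrite {2}Ef -mpolyCM mulVf.
by rewrite -[h]mulr1; apply: idealM.
Qed.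

Lemma ideal_pow_proper I a k : is_graded_ideal I -> is_initdeg I a -> (0 < a)%N ->
  (0 < k)%N -> ~ ideal_pow I k 1.
Proof.
move=> hI ha apos kpos /(pow_homog_deg hI ha) /(_ (oner_neq0 _) (dhomog1 _ _)).
by rewrite leqNgt muln_gt0 kpos apos.
Qed.

End InitialDegree.

Section Bounds.
Variables (K : fieldType) (n : nat).
Local Notation S := {mpoly K[n]}.
Implicit Types (I : polyset K n) (f g h : S).

Lemma lower_bound I a k e f : is_graded_ideal I -> is_initdeg I a -> (0 < k)%N ->
  f \is e.-homog -> Ass (ideal_pow I k) (colon (ideal_pow I k) f) -> (k * a <= a + e)%N.
Proof.
move=> hI ha kpos hf [hP _]; have [[g [nzg hg Ig]] _] := ha.
have hk := (ideal_pow_graded k hI).1.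
have Pg : colon (ideal_pow I k) f g.
  apply: (prime_pow (k := k.-1) hP); rewrite prednK // /colon.
  exact: idealMr hk (pow_in k Ig).
have nzf : f != 0.
  apply/eqP => E; case: hP => _ n1 _; apply: n1.
  by rewrite /colon E mulr0; apply: ideal0.
exact: pow_homog_deg hI ha Pg (mulf_neq0 nzg nzf) (dhomogM hg hf).
Qed.

(* Upper bound: with g in I_alpha, the chain J_t = (I^(t+1) : g^t) stabilizes
   at t0, and a homogeneous h with (J_t0 : h) prime gives the associated
   primes (I^k : g^(k-1) h) for all k > t0. *)
Lemma upper_bound I a : is_graded_ideal I -> is_initdeg I a -> (0 < a)%N ->
  exists t0 (delta : nat), forall k, (t0 < k)%N -> exists f,
    f \is (k.-1 * a + delta)%N.-homog /\ Ass (ideal_pow I k) (colon (ideal_pow I k) f).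
Proof.
move=> hI ha apos; have [[g [nzg hg Ig]] _] := ha.
pose J t := colon (ideal_pow I t.+1) (g ^+ t).
have hJ t : is_graded_ideal (J t).
  exact: colon_graded (ideal_pow_graded t.+1 hI) (dhomogMn t hg).
have Jinc t x : J t x -> J t.+1 x.
  by move=> hx; rewrite /J /colon exprSr mulrA /=; apply: ideal_mul_prod.
have [t0 Jstab] := ideal_chain_stabilizes (fun t => (hJ t).1) Jinc.
have nJ1 : ~ J t0 1.
  rewrite /J /colon mul1r => /(pow_homog_deg hI ha).
  move=> /(_ _ (expf_neq0 _ nzg) (dhomogMn t0 hg)); nia.
have [h [delta [hh hprime]]] := exists_hom_prime (hJ t0) nJ1.
exists t0, delta => -[//|t] /= ht; exists (g ^+ t * h); split.
  by rewrite mulnC; apply: dhomogM => //; apply: dhomogMn.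
apply: Ass_colon; apply: prime_ext hprime => x.
by rewrite /colon [g ^+ t * h]mulrC mulrA; apply: iff_sym (Jstab t ht (x * h)).
Qed.

End Bounds.

Lemma converges_of_sandwich (v : nat -> nat) (a c t0 : nat) :
  (forall k, (t0 < k)%N -> (k * a <= v k + c)%N /\ (v k <= k * a + c)%N) ->
  seq_converges_to (fun k => (v k)%:R / k%:R) a%:R.
Proof.
move=> hv eps eps0.
have [N hN] : exists N : nat, c%:R / eps < N%:R.
  by exists (Num.Def.archi_bound (c%:R / eps)); apply: archi_boundP; rewrite divr_ge0 // ltW.
exists (maxn t0.+1 N) => k; rewrite geq_max => /andP[hk hNk].
have [lo up] := hv k hk.
have kpos : (0 < k%:R :> rat) by rewrite ltr0n; apply: leq_ltn_trans hk.
have L1 : (k%:R * a%:R <= (v k)%:R + c%:R :> rat) by rewrite -natrM -natrD ler_nat.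
have L2 : ((v k)%:R <= k%:R * a%:R + c%:R :> rat) by rewrite -natrM -natrD ler_nat.
have L3 : (c%:R < k%:R * eps :> rat).
  by rewrite -ltr_pdivrMr //; apply: lt_le_trans hN _; rewrite ler_nat.
rewrite (_ : (v k)%:R / k%:R - a%:R = ((v k)%:R - k%:R * a%:R) / k%:R); last first.
  by field; rewrite pnatr_eq0 -lt0n -(ltr0n rat).
rewrite normrM normfV (gtr0_norm kpos) ltr_pdivrMr // ltr_norml.
by apply/andP; split; lra.
Qed.

Theorem theorem4p1 (K : fieldType) (n : nat) (I : polyset K n) :
  is_graded_ideal I -> is_nonzero I -> is_proper I ->
  exists (v : nat -> nat) (a : nat),
    [/\ forall k : nat, (0 < k)%N -> is_vnumber (ideal_pow I k) (v k),
        is_initdeg I a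
      & seq_converges_to (fun k : nat => (v k)%:R / k%:R) a%:R].
Proof.
move=> hI hnz hpr.
have [a ha] := initdeg_exists hI hnz.
have apos := initdeg_pos hI hpr ha.
pose v k := epsilon (inhabits 0%N) (is_vnumber (ideal_pow I k)).
have hv k : (0 < k)%N -> is_vnumber (ideal_pow I k) (v k).
  move=> kpos; apply: epsilon_spec; apply: vnumber_exists.
    exact: ideal_pow_graded.
  exact: ideal_pow_proper ha apos kpos.
exists v, a; split => //.
have [t0 [delta hub]] := upper_bound hI ha apos.
apply: (@converges_of_sandwich v a (a + delta) t0) => k hk.
have kpos : (0 < k)%N by apply: leq_ltn_trans hk.
have [[f [hf hA]] vmin] := hv k kpos.
have lo := lower_bound hI ha kpos hf hA.
have [f' [hf' hA']] := hub k hk.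
have up := vmin _ _ hf' hA'.
split; lia.
Qed.
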